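(* Let $\Omega\subseteq\mathbb{R}^n$ be open and let $f\in\mathbb{A}(\Omega)$ be H-continuous. If there is a dense subset $D$ of $\Omega$ (not necessarily open) such that $f(x)$ is finite for every $x\in D$, then $f$ is nearly finite.
   Context: $\overline{\mathbb{R}}=\mathbb{R}\cup\{\pm\infty\}$, $\mathbb{I}\overline{\mathbb{R}}$ is the set of closed intervals $[\underline a,\overline a]$ with $\underline a\le\overline a$ in $\overline{\mathbb{R}}$, $a\in\overline{\mathbb{R}}$ identified with $[a,a]$. $\mathbb{A}(\Omega)$ is the set of functions $\Omega\to\mathbb{I}\overline{\mathbb{R}}$. An interval value $f(x)$ is finite if both endpoints are real numbers; $f$ is nearly finite if there is an open dense subset $D'$ of $\Omega$ with $f(x)$ finite for all $x\in D'$. $B_\delta(x)=\{y\in\Omega:\|x-y\|<\delta\}$. For $f\in\mathbb{A}(\Omega)$: $I(f)(x)=\sup_{\delta>0}\inf\{z\in f(y):y\in B_\delta(x)\}$, $S(f)(x)=\inf_{\delta>0}\sup\{z\in f(y):y\in B_\delta(x)\}$, $F(f)(x)=[I(f)(x),S(f)(x)]$. $f$ is H-continuous if for every $g\in\mathbb{A}(\Omega)$ with $g(x)\subseteq f(x)$ for all $x$ one has $F(g)=f$. *)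

From HB Require Import structures.
From mathcomp Require Import all_boot all_order all_algebra.
From mathcomp Require Import all_classical all_reals ereal.
Set Implicit Arguments. Unset Strict Implicit. Unset Printing Implicit Defensive.
Import Order.TTheory GRing.Theory Num.Theory.
Local Open Scope classical_set_scope.
Local Open Scope ring_scope.

Definition edist (R : realType) (n : nat) (x y : 'rV[R]_n) : R :=
  Num.sqrt (\sum_(i < n) (x ord0 i - y ord0 i) ^+ 2).

Definition Bdelta (R : realType) (n : nat) (Om : set 'rV[R]_n) (x : 'rV[R]_n) (d : R)
  : set 'rV[R]_n := [set y | Om y /\ edist x y < d].

Definition eopen (R : realType) (n : nat) (U : set 'rV[R]_n) : Prop :=
  forall x, U x -> exists d : R, 0 < d /\ forall y, edist x y < d -> U y.

Definition dense_in (R : realType) (n : nat) (Om D : set 'rV[R]_n) : Prop :=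
  D `<=` Om /\ forall x, Om x -> forall d : R, 0 < d -> exists y, D y /\ edist x y < d.

Record ivl (R : realType) := Ivl { lo : \bar R; hi : \bar R; lo_le_hi : (lo <= hi)%E }.

Definition in_ivl (R : realType) (z : \bar R) (a : ivl R) : Prop :=
  (lo a <= z)%E /\ (z <= hi a)%E.

Definition sub_ivl (R : realType) (a b : ivl R) : Prop :=
  forall z, in_ivl z a -> in_ivl z b.

Definition finite_ivl (R : realType) (a : ivl R) : Prop :=
  lo a \is a fin_num /\ hi a \is a fin_num.

(* Elements of A(Omega): functions Omega -> I(Rbar); values outside Omega are irrelevant. *)
Definition Ilow (R : realType) (n : nat) (Om : set 'rV[R]_n) (f : 'rV[R]_n -> ivl R)
  (x : 'rV[R]_n) : \bar R :=
  ereal_sup [set ereal_inf [set z | exists y, Bdelta Om x d y /\ in_ivl z (f y)]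
            | d in [set d : R | 0 < d]].

Definition Supp (R : realType) (n : nat) (Om : set 'rV[R]_n) (f : 'rV[R]_n -> ivl R)
  (x : 'rV[R]_n) : \bar R :=
  ereal_inf [set ereal_sup [set z | exists y, Bdelta Om x d y /\ in_ivl z (f y)]
            | d in [set d : R | 0 < d]].

Definition Hcont (R : realType) (n : nat) (Om : set 'rV[R]_n) (f : 'rV[R]_n -> ivl R) : Prop :=
  forall g : 'rV[R]_n -> ivl R,
    (forall x, Om x -> sub_ivl (g x) (f x)) ->
    forall x, Om x -> Ilow Om g x = lo (f x) /\ Supp Om g x = hi (f x).

Definition nearly_finite (R : realType) (n : nat) (Om : set 'rV[R]_n) (f : 'rV[R]_n -> ivl R) : Prop :=
  exists D' : set 'rV[R]_n, D' `<=` Om /\ eopen D' /\ dense_in Om D' /\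
    forall x, D' x -> finite_ivl (f x).

(** Taking [g := f] in the definition of H-continuity gives [F(f) = f]. If
    [f(x)] is finite, then [S(f)(x) < +oo], so [f] is bounded above on some
    ball around [x], and likewise bounded below; hence [f] is finite on a
    neighbourhood of [x]. The set where [f] is finite is therefore open, and
    it is dense because it contains [D]. *)
From mathcomp Require Import all_boot all_order all_algebra.
From mathcomp Require Import all_classical all_reals ereal.
Import Order.TTheory GRing.Theory Num.Theory.
Local Open Scope classical_set_scope.
Local Open Scope ring_scope.

Lemma finite_ivlP (R : realType) (a : ivl R) :
  finite_ivl a <-> (-oo < lo a)%E /\ (hi a < +oo)%E.
Proof.
split=> [[/fin_numP[lo_gt _] /fin_numP[_ hi_lt]]|[lo_gt hi_lt]].
  by rewrite ltNye ltey.
have lo_hi := lo_le_hi a.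
split; apply/fin_numP; split.
- by rewrite -ltNye.
- by rewrite -ltey (le_lt_trans lo_hi).
- by rewrite -ltNye (lt_le_trans lo_gt).
- by rewrite -ltey.
Qed.

Lemma Hcont_FE (R : realType) (n : nat) (Om : set 'rV[R]_n) (f : 'rV[R]_n -> ivl R) :
  Hcont Om f -> forall x, Om x -> Ilow Om f x = lo (f x) /\ Supp Om f x = hi (f x).
Proof. by move=> Hf; apply: Hf => x _ z. Qed.

Section LocalBounds.
Variables (R : realType) (n : nat) (Om : set 'rV[R]_n) (f : 'rV[R]_n -> ivl R).

Lemma Supp_lt_near {x : 'rV[R]_n} {M : \bar R} : (Supp Om f x < M)%E ->
  exists2 d : R, 0 < d & forall y, Om y -> edist x y < d -> (hi (f y) < M)%E.
Proof.
move=> /ereal_inf_lt[_ [d d_gt0 <-] sup_lt].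
exists d => // y Om_y xy_lt; apply: le_lt_trans sup_lt; apply: ereal_sup_ubound.
by exists y; split; [|split; [exact: lo_le_hi|]].
Qed.

Lemma Ilow_gt_near {x : 'rV[R]_n} {m : \bar R} : (m < Ilow Om f x)%E ->
  exists2 d : R, 0 < d & forall y, Om y -> edist x y < d -> (m < lo (f y))%E.
Proof.
move=> /ereal_sup_gt[_ [d d_gt0 <-] inf_gt].
exists d => // y Om_y xy_lt; apply: lt_le_trans inf_gt _; apply: ereal_inf_lbound.
by exists y; split; [|split; [|exact: lo_le_hi]].
Qed.

Lemma eopen_finite_part : eopen Om ->
  (forall x, Om x -> Ilow Om f x = lo (f x) /\ Supp Om f x = hi (f x)) ->
  eopen [set x | Om x /\ finite_ivl (f x)].
Proof.
move=> Om_open Ff x [Om_x /finite_ivlP[lo_gt hi_lt]].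
have [FlE FhE] := Ff x Om_x.
rewrite -FhE in hi_lt; rewrite -FlE in lo_gt.
have [d1 d1_gt0 near_hi] := Supp_lt_near hi_lt.
have [d2 d2_gt0 near_lo] := Ilow_gt_near lo_gt.
have [d3 [d3_gt0 near_Om]] := Om_open x Om_x.
exists (Num.min d1 (Num.min d2 d3)); split; first by rewrite !lt_min d1_gt0 d2_gt0.
move=> y; rewrite !lt_min => /and3P[xy_d1 xy_d2 xy_d3].
have Om_y := near_Om y xy_d3.
by split=> //; apply/finite_ivlP; split; [exact: near_lo|exact: near_hi].
Qed.

End LocalBounds.

Lemma dense_in_superset {R : realType} {n : nat} {Om D D' : set 'rV[R]_n} :
  dense_in Om D -> D `<=` D' -> D' `<=` Om -> dense_in Om D'.
Proof.
move=> [_ D_dense] DD' D'Om; split=> // x Om_x d d_gt0.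
by have [y [Dy xy_lt]] := D_dense x Om_x d d_gt0; exists y; split; [exact: DD'|].
Qed.

Theorem theorem22 (R : realType) (n : nat) (Om : set 'rV[R]_n) (f : 'rV[R]_n -> ivl R) :
  eopen Om -> Hcont Om f ->
  (exists D : set 'rV[R]_n, dense_in Om D /\ forall x, D x -> finite_ivl (f x)) ->
  nearly_finite Om f.
Proof.
move=> Om_open Hf [D [D_dense D_fin]].
exists [set x | Om x /\ finite_ivl (f x)]; split; first by move=> x [].
split; first by apply: eopen_finite_part => //; exact: Hcont_FE.
split; last by move=> x [].
apply: (dense_in_superset D_dense) => [x Dx|x []//].
by split; [exact: D_dense.1|exact: D_fin].
Qed.
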